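(* Let $D\subset\mathbb{C}^n$ be a domain containing $o$, let $\Phi^D_{o,\max}$ be a global Zhou weight related to $|f_0|^2e^{-2\varphi_0}$ on $D$, and let $\psi$ be a negative plurisubharmonic function on $D$. Then $\psi\le\sigma(\psi,\Phi^D_{o,\max})\,\Phi^D_{o,\max}$ on all of $D$.
   Context: Let $o$ be the origin; ''near $o$'' means on some neighborhood of $o$; ''integrable near $o$'' means Lebesgue integrable on some neighborhood of $o$. Let $f_0=(f_{0,1},\dots,f_{0,m})$ be holomorphic near $o$, $|f_0|^2=\sum|f_{0,j}|^2$, $\varphi_0$ plurisubharmonic near $o$ with $|f_0|^2e^{-2\varphi_0}$ integrable near $o$. A negative plurisubharmonic function $\Phi^D_{o,\max}$ on $D$ is a global Zhou weight related to $|f_0|^2e^{-2\varphi_0}$ on $D$ if: (1) $|f_0|^2e^{-2\varphi_0}|z|^{2N_0}e^{-2\Phi^D_{o,\max}}$ is integrable near $o$ for some $N_0$; (2) $|f_0|^2e^{-2\varphi_0-2\Phi^D_{o,\max}}$ is not integrable near $o$; (3) every negative plurisubharmonic $\tilde\varphi$ on $D$ with $\tilde\varphi\ge\Phi^D_{o,\max}$ on $D$ and $|f_0|^2e^{-2\varphi_0-2\tilde\varphi}$ not integrable near $o$ equals $\Phi^D_{o,\max}$ on $D$. $\sigma(\psi,\Phi):=\sup\{b\ge0:\psi\le b\Phi+O(1)\text{ near }o\}$ (with the convention $0\cdot\Phi:=0$ if $\sigma=0$). *)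

From HB Require Import structures.
From mathcomp Require Import all_boot all_order all_algebra.
From mathcomp Require Import all_classical all_reals all_analysis.
From mathcomp Require Import complex.
Import Order.TTheory GRing.Theory Num.Theory.
Import numFieldTopology.Exports numFieldNormedType.Exports.

Set Implicit Arguments.
Unset Strict Implicit.
Unset Printing Implicit Defensive.

Local Open Scope classical_set_scope.
Local Open Scope ring_scope.

(* The complex field over a real field R, viewed as a numClosedFieldType
   (so that it carries its canonical norm/topology). *)
Definition CC (R : realType) : numClosedFieldType := (R[i] : numClosedFieldType).

(* C^n as row vectors (with the product topology = Euclidean topology). *)
Definition Cn (R : realType) (n : nat) := 'rV[CC R]_n.

Definition abs2 (R : realType) (w : CC R) : R := (@complex.Re R w) ^+ 2 + (@complex.Im R w) ^+ 2.
Definition sqnorm (R : realType) (n : nat) (z : Cn R n) : R :=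
  \sum_(i < n) abs2 (z ord0 i).

Definition expi (R : realType) (t : R) : CC R := (@complex.Complex R (cos t) (sin t)).

Definition zpt (R : realType) (n : nat) (x : nat -> R) : Cn R n :=
  \row_(i < n) (@complex.Complex R (x i.*2) (x i.*2.+1) : CC R).

Local Open Scope ereal_scope.

(* k-fold iterated Lebesgue integral over R^k (coordinates 0..k-1) of a
   function of the real coordinates; for nonnegative measurable integrands this
   is the Lebesgue integral over R^k (Tonelli). *)
Fixpoint iter_int (R : realType) (k : nat) (g : (nat -> R) -> \bar R) : \bar R :=
  match k with
  | 0 => g (fun _ => 0%R)
  | k'.+1 => iter_int k' (fun x =>
       \int[@lebesgue_measure R]_(t in [set: R])
          g (fun j => if j == k' then t else x j))
  end.

Definition int_Cn (R : realType) (n : nat) (F : Cn R n -> \bar R) : \bar R :=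
  iter_int (n.*2) (fun x => F (zpt n x)).

Definition integrable_near_o (R : realType) (n : nat) (F : Cn R n -> \bar R) : Prop :=
  exists r : R, (0 < r)%R /\
    int_Cn (fun z => if (sqnorm z < r ^+ 2)%R then F z else 0) < +oo.

Definition holomorphic_on (R : realType) (n : nat) (U : set (Cn R n))
    (f : Cn R n -> CC R) : Prop :=
  forall z, U z -> differentiable f z.

Definition psh_on (R : realType) (n : nat) (D : set (Cn R n))
    (u : Cn R n -> \bar R) : Prop :=
  open D /\
  (forall z, D z -> u z < +oo) /\
  (forall z, D z -> forall c : R, u z < c%:E -> \forall w \near z, u w < c%:E) /\
  (forall a b : Cn R n,
      (forall l : CC R, `|l| <= 1 -> D (a + l *: b))%R ->
      u a <= ((2 * pi)^-1)%:E *
             \int[@lebesgue_measure R]_(t in `[0%R, (2 * pi)%R])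
                 u (a + expi t *: b)%R) /\
  (forall z, D z -> exists w, connected_component D z w /\ u w != -oo).

Definition neg_psh_on (R : realType) (n : nat) (D : set (Cn R n))
    (u : Cn R n -> \bar R) : Prop :=
  psh_on D u /\ (forall z, D z -> u z < 0).

Definition domain_with_o (R : realType) (n : nat) (D : set (Cn R n)) : Prop :=
  open D /\ connected D /\ D 0%R.

Definition weight_f0 (R : realType) (n m : nat) (f0 : 'I_m -> Cn R n -> CC R)
    (phi0 : Cn R n -> \bar R) (z : Cn R n) : \bar R :=
  (\sum_(j < m) abs2 (f0 j z))%R%:E * expeR (- (2%:E * phi0 z)).

Definition global_Zhou_weight (R : realType) (n m : nat) (D : set (Cn R n))
    (f0 : 'I_m -> Cn R n -> CC R) (phi0 : Cn R n -> \bar R)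
    (Phi : Cn R n -> \bar R) : Prop :=
  neg_psh_on D Phi /\
  (exists N0 : nat, integrable_near_o (fun z =>
       weight_f0 f0 phi0 z * ((sqnorm z) ^+ N0)%:E * expeR (- (2%:E * Phi z)))) /\
  ~ integrable_near_o (fun z => weight_f0 f0 phi0 z * expeR (- (2%:E * Phi z))) /\
  (forall phit : Cn R n -> \bar R,
      neg_psh_on D phit ->
      (forall z, D z -> Phi z <= phit z) ->
      ~ integrable_near_o (fun z => weight_f0 f0 phi0 z * expeR (- (2%:E * phit z))) ->
      forall z, D z -> phit z = Phi z).

(* sigma(psi, Phi) = sup { b >= 0 : psi <= b Phi + O(1) near o }  (in \bar R);
   with b = 0 the term b * Phi is 0 (mathcomp: 0 * -oo = 0). *)
Definition sigma_rel (R : realType) (n : nat) (D : set (Cn R n))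
    (psi Phi : Cn R n -> \bar R) : \bar R :=
  ereal_sup [set b%:E | b in [set b : R | (0 <= b)%R /\
     exists r : R, (0 < r)%R /\ exists c : R,
       forall z, D z -> (sqnorm z < r ^+ 2)%R -> psi z <= b%:E * Phi z + c%:E]].

From HB Require Import structures.
From mathcomp Require Import all_boot all_order all_algebra.
From mathcomp Require Import all_classical all_reals all_analysis.
From mathcomp Require Import complex.
Import Order.TTheory GRing.Theory Num.Theory.
Import numFieldTopology.Exports numFieldNormedType.Exports.

Set Implicit Arguments.
Unset Strict Implicit.
Unset Printing Implicit Defensive.
Local Open Scope classical_set_scope.
Local Open Scope ring_scope.
Local Open Scope ereal_scope.

(* Fix b > 0 with psi <= b Phi + O(1) near o.  On D the function
   max(Phi, psi / b) is again negative plurisubharmonic and dominates Phi, and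
   near o it is at most Phi + O(1); hence |f0|^2 e^(-2 phi0) e^(-2 max(Phi, psi/b))
   is still non-integrable near o, and the maximality of the Zhou weight forces
   max(Phi, psi / b) = Phi, i.e. psi <= b Phi on D.  Since Phi < 0, taking the
   supremum over all admissible b yields psi <= sigma(psi, Phi) Phi. *)

Lemma expeR_le_maxe (R : realType) (x y : \bar R) (c : R) : (0 <= c)%R ->
  y <= x + c%:E ->
  expeR (- (2%:E * x)) <= (expR (2 * c))%:E * expeR (- (2%:E * maxe x y)).
Proof.
move=> c0 yxc.
have maxc : maxe x y <= x + c%:E by rewrite ge_max yxc leeDl// lee_fin.
have -> : expeR (- (2%:E * x)) =
    (expR (2 * c))%:E * expeR (- (2%:E * (x + c%:E))).
  rewrite muleDr ?fin_num_adde_defl// addeC oppeD// expeRD muleA -EFinM /=.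
  by rewrite -expRD subrr expR0 mul1e.
by rewrite lee_wpmul2l ?lee_fin ?expR_ge0// lee_expeR leeN2 lee_wpmul2l.
Qed.

(* Plurisubharmonic functions are not assumed measurable here, so the
   library's monotonicity and scaling lemmas for integrals do not apply. *)
Section integral_nonmeasurable.
Context d (T : measurableType d) (R : realType) (mu : {measure set T -> \bar R}).
Import HBNNSimple.

Lemma ge0_le_integral_nonmeas (D : set T) (f g : T -> \bar R) :
  (forall x, D x -> 0 <= f x) -> (forall x, D x -> f x <= g x) ->
  \int[mu]_(x in D) f x <= \int[mu]_(x in D) g x.
Proof.
move=> f0 fg.
have g0 x : D x -> 0 <= g x by move=> Dx; exact: le_trans (f0 x Dx) (fg x Dx).
rewrite !ge0_integralE//.
apply: ge_ereal_sup => _ [h hf <-]; apply: ereal_sup_ubound; exists h => //= x.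
by apply: le_trans (hf x) _; rewrite /patch; case: ifPn => //; rewrite inE => /fg.
Qed.

Lemma le_integral_nonmeas (D : set T) (f g : T -> \bar R) :
  (forall x, D x -> f x <= g x) ->
  \int[mu]_(x in D) f x <= \int[mu]_(x in D) g x.
Proof.
move=> fg; rewrite integralE [X in _ <= X]integralE; apply: leeB.
  apply: ge0_le_integral_nonmeas => x Dx; first by rewrite funeposE le_max lexx orbT.
  by rewrite !funeposE; apply: le_max2 => //; exact: fg.
apply: ge0_le_integral_nonmeas => x Dx; first by rewrite funenegE le_max lexx orbT.
by rewrite !funenegE; apply: le_max2 => //; rewrite leeN2; exact: fg.
Qed.

Lemma ge0_integralZl_le_nonmeas (D : set T) (f : T -> \bar R) (k : R) :
  (0 < k)%R -> (forall x, D x -> 0 <= f x) ->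
  k%:E * \int[mu]_(x in D) f x <= \int[mu]_(x in D) (k%:E * f x).
Proof.
move=> k0 f0.
have kf0 x : D x -> 0 <= k%:E * f x.
  by move=> Dx; apply: mule_ge0; [rewrite lee_fin ltW|exact: f0].
rewrite !ge0_integralE// -ereal_sup_pZl//.
apply: ge_ereal_sup => _ [_ [h hf <-] <-]; apply: ereal_sup_ubound.
exists (scale_nnsfun h (ltW k0)); last by rewrite sintegralrM.
move=> x /=; have := hf x; rewrite /patch; case: ifPn => Dx hx; rewrite EFinM.
  by apply: lee_wpmul2l; first by rewrite lee_fin ltW.
by apply: mule_ge0_le0; first by rewrite lee_fin ltW.
Qed.

Lemma ge0_integralZl_nonmeas (D : set T) (f : T -> \bar R) (k : R) :
  (0 < k)%R -> (forall x, D x -> 0 <= f x) ->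
  \int[mu]_(x in D) (k%:E * f x) = k%:E * \int[mu]_(x in D) f x.
Proof.
move=> k0 f0; apply/eqP; rewrite eq_le ge0_integralZl_le_nonmeas// andbT.
have kf0 x : D x -> 0 <= k%:E * f x.
  by move=> Dx; apply: mule_ge0; [rewrite lee_fin ltW|exact: f0].
have ki0 : (0 < k^-1)%R by rewrite invr_gt0.
have := @ge0_integralZl_le_nonmeas D _ _ ki0 kf0.
rewrite [X in _ <= X -> _](@eq_integral _ _ _ _ _ f); last first.
  by move=> x _; rewrite muleA -EFinM mulVf ?gt_eqF// mul1e.
by move=> ?; rewrite -(@lee_pmul2l _ (k^-1)%:E) ?lte_fin// muleA -EFinM mulVf ?gt_eqF// mul1e.
Qed.

Lemma gt0_integralZl_nonmeas (D : set T) (f : T -> \bar R) (k : R) :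
  (0 < k)%R -> \int[mu]_(x in D) (k%:E * f x) = k%:E * \int[mu]_(x in D) f x.
Proof.
move=> k0; rewrite integralE [in RHS]integralE.
have k0' : 0 <= k%:E by rewrite lee_fin ltW.
rewrite (@eq_integral _ _ _ _ _ (fun x => k%:E * f^\+ x)); last first.
  by move=> x _; rewrite !funeposE maxe_pMr// mule0.
rewrite [X in _ - X](@eq_integral _ _ _ _ _ (fun x => k%:E * f^\- x)); last first.
  by move=> x _; rewrite !funenegE maxe_pMr// mule0 muleN.
rewrite !ge0_integralZl_nonmeas//.
have ky : k%:E * +oo = +oo by rewrite gt0_muley ?lte_fin.
have kNy : k%:E * -oo = -oo by rewrite gt0_muleNy ?lte_fin.
have : 0 <= \int[mu]_(x in D) f^\+ x.
  by apply: integral_ge0 => x _; rewrite funeposE le_max lexx orbT.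
have : 0 <= \int[mu]_(x in D) f^\- x.
  by apply: integral_ge0 => x _; rewrite funenegE le_max lexx orbT.
case: (\int[mu]_(x in D) f^\- x) => [q||]//; case: (\int[mu]_(x in D) f^\+ x) => [p||]//.
- by rewrite -!EFinM -EFinB mulrBr.
all: by rewrite ky /= ?kNy ?ky.
Qed.
End integral_nonmeasurable.

Lemma le_iter_int (R : realType) (k : nat) (g h : (nat -> R) -> \bar R) :
  (forall x, g x <= h x) -> iter_int k g <= iter_int k h.
Proof.
elim: k g h => [|k IH] g h gh //=.
by apply: IH => x; apply: le_integral_nonmeas => t _; exact: gh.
Qed.

Lemma iter_intZl (R : realType) (k : nat) (g : (nat -> R) -> \bar R) (c : R) :
  (0 < c)%R -> iter_int k (fun x => c%:E * g x) = c%:E * iter_int k g.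
Proof.
move=> c0; elim: k g => [|k IH] g //=.
by rewrite -IH; congr iter_int; apply: funext => x; exact: gt0_integralZl_nonmeas.
Qed.

Lemma integrable_near_o_le (R : realType) (n : nat) (F G : Cn R n -> \bar R)
    (K r : R) : (0 < K)%R -> (0 < r)%R ->
  (forall z, (sqnorm z < r ^+ 2)%R -> F z <= K%:E * G z) ->
  (forall z, 0 <= G z) ->
  integrable_near_o G -> integrable_near_o F.
Proof.
move=> K0 r0 FG G0 [r' [r'0 intG]]; pose m := Num.min r r'.
have m0 : (0 <= m)%R by rewrite le_min !ltW.
have ltr_sqnorm z t : (m <= t)%R -> (sqnorm z < m ^+ 2)%R -> (sqnorm z < t ^+ 2)%R.
  move=> mt zm; apply: lt_le_trans zm (lerXn2r 2 _ _ mt); rewrite nnegrE//.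
  exact: le_trans mt.
exists m; split; first by rewrite lt_min r0 r'0.
have K0' : 0 <= K%:E by rewrite lee_fin ltW.
apply: le_lt_trans (lte_mul_pinfty K0' _ intG) => //.
rewrite /int_Cn -iter_intZl//; apply: le_iter_int => x.
case: ifP => zm.
  rewrite ltr_sqnorm ?ge_min ?lexx ?orbT//; apply: FG.
  by rewrite ltr_sqnorm ?ge_min ?lexx.
by apply: mule_ge0 => //; case: ifP.
Qed.

Lemma norm_expi (R : realType) (t : R) : (`|expi t| = 1)%R.
Proof. by rewrite normc_def /= cos2Dsin2 sqrtr1. Qed.

Section psh_operations.
Context (R : realType) (n : nat) (D : set (Cn R n)).

Let inv2pi_ge0 : 0 <= ((2 * pi)^-1)%:E :> \bar R.
Proof. by rewrite lee_fin invr_ge0 mulr_ge0 ?pi_ge0. Qed.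

Lemma psh_on_max (u v : Cn R n -> \bar R) :
  psh_on D u -> psh_on D v -> psh_on D (fun z => maxe (u z) (v z)).
Proof.
move=> [oD [uy [uusc [umean ucomp]]]] [_ [vy [vusc [vmean _]]]].
split=> //; split; [|split; [|split]].
- by move=> z Dz; rewrite gt_max uy ?vy.
- move=> z Dz c; rewrite gt_max => /andP[uc vc].
  near=> w; rewrite gt_max; apply/andP; split; near: w.
  + exact: uusc.
  + exact: vusc.
- move=> a b disc; rewrite ge_max; apply/andP; split.
  + apply: le_trans (umean a b disc) _; apply: lee_wpmul2l => //.
    by apply: le_integral_nonmeas => t _; rewrite le_max lexx.
  + apply: le_trans (vmean a b disc) _; apply: lee_wpmul2l => //.
    by apply: le_integral_nonmeas => t _; rewrite le_max lexx orbT.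
- move=> z Dz; have [w [zw uw]] := ucomp z Dz; exists w; split=> //.
  apply: contra uw => /eqP uvw; rewrite -leeNy_eq -uvw le_max lexx.
Unshelve. all: by end_near.
Qed.

Lemma psh_onZl (k : R) (u : Cn R n -> \bar R) : (0 < k)%R ->
  psh_on D u -> psh_on D (fun z => k%:E * u z).
Proof.
move=> k0 [oD [uy [uusc [umean ucomp]]]].
have k0' : 0 <= k%:E by rewrite lee_fin ltW.
split=> //; split; [|split; [|split]].
- by move=> z Dz; rewrite lte_mul_pinfty ?uy.
- move=> z Dz c; rewrite -lte_pdivlMl// -EFinM => /(uusc z Dz).
  by apply: filterS => w; rewrite EFinM lte_pdivlMl.
- move=> a b disc; rewrite gt0_integralZl_nonmeas// muleCA.
  by apply: lee_wpmul2l; last exact: umean.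
- move=> z Dz; have [w [zw uw]] := ucomp z Dz; exists w; split=> //.
  by move: uw; case: (u w) => [x||]//= _; rewrite gt0_muley ?lte_fin.
Qed.

Lemma psh_on_eq (u v : Cn R n -> \bar R) :
  (forall z, D z -> u z = v z) -> psh_on D u -> psh_on D v.
Proof.
move=> uv [oD [uy [uusc [umean ucomp]]]].
split=> //; split; [|split; [|split]].
- by move=> z Dz; rewrite -uv ?uy.
- move=> z Dz c; rewrite -uv// => /(uusc z Dz) uc.
  have Dnear : \forall w \near z, D w by apply: open_nbhs_nbhs.
  by near=> w; rewrite -uv; [near: w|near: w].
- move=> a b disc.
  have Da : D a by have := disc 0%R; rewrite normr0 ler01 scale0r addr0; apply.
  rewrite -uv//; apply: le_trans (umean a b disc) _; apply: lee_wpmul2l => //.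
  by apply: le_integral_nonmeas => t _; rewrite uv//; apply: disc; rewrite norm_expi.
- move=> z Dz; have [w [zw uw]] := ucomp z Dz; exists w; split=> //.
  by rewrite -uv//; exact: connected_component_sub zw.
Unshelve. all: by end_near.
Qed.

End psh_operations.

Lemma weight_f0_ge0 (R : realType) (n m : nat) (f0 : 'I_m -> Cn R n -> CC R)
    (phi0 : Cn R n -> \bar R) (z : Cn R n) : 0 <= weight_f0 f0 phi0 z.
Proof.
apply: mule_ge0; last exact: expeR_ge0.
by rewrite lee_fin sumr_ge0// => i _; rewrite addr_ge0 ?sqr_ge0.
Qed.

Lemma global_Zhou_weight_le_scale (R : realType) (n m : nat) (D : set (Cn R n))
    (f0 : 'I_m -> Cn R n -> CC R) (phi0 : Cn R n -> \bar R)
    (Phi psi : Cn R n -> \bar R) (b : R) :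
  (0 < b)%R -> global_Zhou_weight D f0 phi0 Phi -> neg_psh_on D psi ->
  (exists r : R, (0 < r)%R /\ exists c : R, forall z, D z ->
      (sqnorm z < r ^+ 2)%R -> psi z <= b%:E * Phi z + c%:E) ->
  forall z, D z -> psi z <= b%:E * Phi z.
Proof.
move=> b0 [[PhiP Phineg] [_ [Phinonint Phimax]]] [psiP psineg] [r [r0 [c psiPhi]]].
have bV0 : (0 < b^-1)%R by rewrite invr_gt0.
pose c' := (b^-1 * Num.max c 0)%R.
have c'0 : (0 <= c')%R by rewrite mulr_ge0 ?le_max ?lexx ?orbT ?ltW.
have psiPhi' z : D z -> (sqnorm z < r ^+ 2)%R -> (b^-1)%:E * psi z <= Phi z + c'%:E.
  move=> Dz zr; rewrite -(@lee_pmul2l _ b%:E)// ?lte_fin// muleA -EFinM mulfV ?gt_eqF//.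
  rewrite mul1e muleDr ?fin_num_adde_defl// -EFinM /c' mulrA mulfV ?gt_eqF// mul1r.
  by apply: le_trans (psiPhi z Dz zr) (leeD _ _); rewrite ?lee_fin ?le_max ?lexx.
(* Off D the candidate must coincide with Phi: integrability near o is tested
   on a whole ball, not only on D. *)
pose phit z := if `[< D z >] then maxe (Phi z) ((b^-1)%:E * psi z) else Phi z.
have phitD z : D z -> phit z = maxe (Phi z) ((b^-1)%:E * psi z).
  by move=> Dz; rewrite /phit asboolT.
have phitP : neg_psh_on D phit.
  split; last by move=> z Dz; rewrite phitD// gt_max Phineg//= pmule_rlt0 ?lte_fin ?psineg.
  by apply: psh_on_eq (fun z Dz => esym (phitD z Dz)) (psh_on_max PhiP (psh_onZl bV0 psiP)).
have phit_nonint : ~ integrable_near_o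
    (fun z => weight_f0 f0 phi0 z * expeR (- (2%:E * phit z))).
  move=> intphit; apply: Phinonint.
  apply: (integrable_near_o_le (expR_gt0 (2 * c')) r0 _ _ intphit); last first.
    by move=> z; rewrite mule_ge0 ?weight_f0_ge0 ?expeR_ge0.
  move=> z zr; rewrite muleCA lee_wpmul2l ?weight_f0_ge0//.
  rewrite /phit; case: asboolP => [Dz|_]; first exact: expeR_le_maxe (psiPhi' z Dz zr).
  by rewrite lee_pemull ?expeR_ge0// lee_fin -expR0 ler_expR mulr_ge0.
have Phi_le_phit z : D z -> Phi z <= phit z by move=> Dz; rewrite phitD// le_max lexx.
have phitE := Phimax phit phitP Phi_le_phit phit_nonint.
move=> z Dz; rewrite -(@lee_pmul2l _ (b^-1)%:E) ?lte_fin// muleA -EFinM mulVf ?gt_eqF//.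
by rewrite mul1e -(phitE z Dz) phitD// le_max lexx orbT.
Qed.

Lemma le_ereal_supMr_lt0 (R : realType) (S : set R) (x y : \bar R) :
  S 0%R -> x < 0 -> (forall b, S b -> y <= b%:E * x) ->
  y <= ereal_sup [set b%:E | b in S] * x.
Proof.
move=> S0 x0 yS; set s := ereal_sup _.
have s0 : 0 <= s by apply: ereal_sup_ubound; exists 0%R.
have := yS 0%R S0; rewrite mul0e.
case: y yS => [y||] yS y0 //; last by rewrite leNye.
case: x x0 yS => [x||] // x0 yS.
- rewrite lte_fin in x0; have : s <= (y / x)%:E.
    by apply: ge_ereal_sup => _ [b Sb <-]; rewrite lee_fin ler_ndivlMr// -lee_fin yS.
  case: s s0 => [s||] // _; rewrite !lee_fin => sxy.
  by have := ler_wnM2r (ltW x0) sxy; rewrite divfK ?ltr0_neq0.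
- have [s_le0|s_gt0] := leP s 0.
    by rewrite (@le_anti _ _ s 0 _) ?s_le0 ?s0// mul0e lee_fin.
  have [_ [b Sb <-] b_gt0] := ereal_sup_gt s_gt0.
  by have := yS b Sb; rewrite gt0_muleNy.
Qed.

Local Close Scope ereal_scope.

Theorem lemma8p9 (R : realType) (n m : nat) (D : set (Cn R n))
    (f0 : 'I_m -> Cn R n -> CC R) (phi0 : Cn R n -> \bar R)
    (Phi psi : Cn R n -> \bar R) :
  (0 < n)%N ->
  domain_with_o D ->
  (exists U : set (Cn R n), open U /\ U 0 /\
     (forall j, holomorphic_on U (f0 j)) /\ psh_on U phi0) ->
  integrable_near_o (weight_f0 f0 phi0) ->
  global_Zhou_weight D f0 phi0 Phi ->
  neg_psh_on D psi ->
  forall z, D z -> (psi z <= sigma_rel D psi Phi * Phi z)%E.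
Proof.
move=> _ _ _ _ Zhou psiP z Dz; have [_ psi_lt0] := psiP.
apply: le_ereal_supMr_lt0; last 2 first.
- exact: Zhou.1.2.
- move=> b [+ psi_le]; rewrite le_eqVlt => /predU1P[<-|b_gt0].
    by rewrite mul0e ltW ?psi_lt0.
  exact: global_Zhou_weight_le_scale b_gt0 Zhou psiP psi_le z Dz.
split=> //; exists 1%R; split=> //; exists 0%R => w Dw _.
by rewrite mul0e add0e ltW ?psi_lt0.
Qed.
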